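(* Let $M\in\mathbb{N}$, $r\in\{1,\dots,M\}$, let $C\in\mathbb{R}^{M\times M}$ have singular values $\lambda_1\ge\dots\ge\lambda_M$, let $E\in\mathbb{R}^{M\times M}$ be any matrix with largest singular value $\sigma_1$, and let $\pi_r\in\mathcal{S}_{M,r}$ maximize $\|\tilde\pi_r C\|_{S_2}$ over $\mathcal{S}_{M,r}$. Define for $\tilde\pi_r\in\mathcal{S}_{M,r}$ $$Z^1_{\tilde\pi_r}:=\|\tilde\pi_r C\|_{S_2}^2-\|\pi_r C\|_{S_2}^2+2\operatorname{tr}\big(E^T(\tilde\pi_r-\pi_r)C\big).$$ Then $\sup_{\tilde\pi_r\in\mathcal{S}_{M,r}}Z^1_{\tilde\pi_r}\le\min(\mathrm{I}',\mathrm{II}',\mathrm{III}')$, where $$\mathrm{I}'=4r_M\lambda_1\sigma_1,$$ $$\mathrm{II}'=4r_M\frac{\lambda_1^2}{\lambda_r^2-\lambda_{r+1}^2}\sigma_1^2\ \text{ if }\lambda_r>\lambda_{r+1},\qquad \mathrm{II}'=\infty\ \text{ if }\lambda_r=\lambda_{r+1},$$ $$\mathrm{III}'=\max\Big(4\sqrt{r_M\Delta_r}\,\frac{\lambda_1}{\lambda_r}\sigma_1,\ 8r_M\frac{\lambda_1^2}{\lambda_r^2}\sigma_1^2\Big)\ \text{ if }\lambda_r>0,\qquad \mathrm{III}'=\infty\ \text{ if }\lambda_r=0.$$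
   Context: $\mathcal{S}_{M,r}$ denotes the set of all orthogonal projections of rank $r$ onto subspaces of $\mathbb{R}^M$. $r_M:=\min(r,M-r)$, $\Delta_r:=\sum_{i=r+1}^{2r}\lambda_i^2$ with the convention $\lambda_i:=0$ for $i>M$. $\|\cdot\|_{S_2}$ is the Hilbert–Schmidt norm. *)

From HB Require Import structures.
From mathcomp Require Import all_boot all_order all_algebra.
Set Implicit Arguments. Unset Strict Implicit. Unset Printing Implicit Defensive.
Import Order.TTheory GRing.Theory Num.Theory.
Local Open Scope ring_scope.

Section Defs.
Variable R : rcfType.

(* 1-based access to a list of singular values, with lam_ s i = 0 for i > size s *)
Definition lam_ (s : seq R) (i : nat) : R := nth 0 s i.-1.

Definition is_svals (M : nat) (C : 'M[R]_M) (s : seq R) : Prop :=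
  [/\ size s = M, sorted (fun x y => y <= x) s, all (fun x => 0 <= x) s &
   exists U V : 'M[R]_M,
     [/\ U^T *m U = 1%:M, V^T *m V = 1%:M &
         C = U *m diag_mx (\row_(i < M) s`_i) *m V^T]].

Definition is_orth_proj (M r : nat) (P : 'M[R]_M) : Prop :=
  [/\ P^T = P, P *m P = P & \rank P = r].

Definition hs2 (M : nat) (A : 'M[R]_M) : R := \tr (A^T *m A).

Definition Delta (s : seq R) (r : nat) : R :=
  \sum_(r.+1 <= i < (2 * r).+1) lam_ s i ^+ 2.

Definition Z1 (M : nat) (C E P pi : 'M[R]_M) : R :=
  hs2 (P *m C) - hs2 (pi *m C) + 2 * \tr (E^T *m (P - pi) *m C).

End Defs.

(* Write A = C C^T = U diag(lambda_i^2) U^T; a maximizer pi of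
   P |-> |P C|^2 = tr(P A) over rank-r projections is fixed.
   1. Comparing pi with the projection onto the top r left singular vectors
      and splitting A = lambda_r^2 + A+ - A- (eigenvalues above/below
      lambda_r^2) shows that pi absorbs A+ and kills A-: pi commutes with A,
      and pi is the top projection under a gap lambda_(r+1) < lambda_r.
   2. For a competitor P, (P - pi) C = X1 - X2 with X1 = P (1 - pi) C and
      X2 = (1 - P) pi C; commutation gives |PC|^2 - |pi C|^2 = |X1|^2 - |X2|^2,
      hence |X1| <= |X2| by maximality.
   3. pi C = C pih for a rank-r projection pih, so each Xi factors through
      ranges of dimension r and M - r; Cauchy-Schwarz bounds the cross term
      tr(E^T (X1 - X2)) by sqrt(r_M) sigma_1 (|X1| + |X2|).
   4. With the defect h = tr(P (1 - pi)) <= r_M: |Xi|^2 <= lambda_1^2 h,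
      |X1|^2 <= Delta_r, and under a gap |X1|^2 <= lambda_(r+1)^2 h and
      lambda_r^2 h <= |X2|^2.
   5. Three elementary real inequalities then give I', II' and III'. *)

From mathcomp Require Import all_boot all_order all_algebra.
From mathcomp Require Import ring lra.
Import Order.TTheory GRing.Theory Num.Theory.
Local Open Scope ring_scope.
Set Implicit Arguments. Unset Strict Implicit. Unset Printing Implicit Defensive.

Lemma sum_nat_trunc (V : nmodType) (f : nat -> V) m k :
  (forall i, (minn m k <= i)%N -> (i < maxn m k)%N -> f i = 0) ->
  \sum_(0 <= i < m) f i = \sum_(0 <= i < k) f i.
Proof.
move=> f0; wlog mk : m k f0 / (m <= k)%N.
  move=> hwlog; case: (leqP m k) => [|/ltnW km]; first exact: hwlog.
  by symmetry; apply: hwlog => // i; rewrite minnC maxnC; apply: f0.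
rewrite (@big_cat_nat _ _ _ m 0 k) //= [X in _ + X]big_nat_cond.
rewrite [X in _ + X]big1 ?addr0 //.
move=> i /andP[/andP[mi ik] _]; apply: f0; first by rewrite (minn_idPl mk).
by rewrite (maxn_idPr mk).
Qed.

Section PsdMatrices.
Variables (R : rcfType) (n : nat).
Implicit Types (X Y Z Q : 'M[R]_n).

Definition psd X := exists k (G : 'M[R]_(k, n)), X = G^T *m G.

(* The trace of a Gram matrix is the sum of squares of the entries of G. *)
Lemma trace_gram_ge0 k (G : 'M[R]_(k, n)) : 0 <= \tr (G^T *m G).
Proof.
apply: sumr_ge0 => i _; rewrite mxE; apply: sumr_ge0 => j _.
by rewrite mxE -expr2 sqr_ge0.
Qed.

Lemma trace_gram_eq0 k (G : 'M[R]_(k, n)) : \tr (G^T *m G) = 0 -> G = 0.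
Proof.
move=> trG0; apply/matrixP => j i; rewrite [RHS]mxE.
have col_ge0 i0 : 0 <= (G^T *m G) i0 i0.
  by rewrite mxE; apply: sumr_ge0 => j0 _; rewrite mxE -expr2 sqr_ge0.
have := psumr_eq0P (fun i0 _ => col_ge0 i0) trG0 (i := i) isT.
rewrite mxE => colG0.
have entry_ge0 (j0 : 'I_k) : 0 <= G^T i j0 * G j0 i by rewrite mxE -expr2 sqr_ge0.
have := psumr_eq0P (fun j0 _ => entry_ge0 j0) colG0 (i := j) isT.
by rewrite mxE -expr2 => /eqP; rewrite sqrf_eq0 => /eqP.
Qed.

Lemma hs2_ge0 X : 0 <= hs2 X.
Proof. exact: trace_gram_ge0. Qed.

Lemma psd_tr_ge0 X : psd X -> 0 <= \tr X.
Proof. by case=> k [G ->]; apply: trace_gram_ge0. Qed.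

Lemma psd_congr X Z : psd X -> psd (Z^T *m X *m Z).
Proof. by case=> k [G ->]; exists k, (G *m Z); rewrite trmx_mul !mulmxA. Qed.

Lemma psd_congr_tr_eq0 X Z : psd X -> \tr (Z^T *m X *m Z) = 0 -> X *m Z = 0.
Proof.
case=> k [G ->] trGZ.
have GZ0 : G *m Z = 0.
  by apply: trace_gram_eq0; rewrite trmx_mul !mulmxA; rewrite !mulmxA in trGZ.
by rewrite -mulmxA GZ0 mulmx0.
Qed.

Lemma psd_congr_tr_le X Y Z :
  psd (Y - X) -> \tr (Z^T *m X *m Z) <= \tr (Z^T *m Y *m Z).
Proof.
by move=> /(psd_congr Z) /psd_tr_ge0; rewrite mulmxBr mulmxBl linearB subr_ge0.
Qed.

Definition proj Q := Q^T = Q /\ Q *m Q = Q.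

Lemma proj_psd Q : proj Q -> psd Q.
Proof. by case=> symQ idQ; exists n, Q; rewrite symQ idQ. Qed.

Lemma proj_compl Q : proj Q -> proj (1%:M - Q).
Proof.
case=> symQ idQ; split; first by rewrite linearB /= trmx1 symQ.
by rewrite !mulmxBl !mulmxBr !mul1mx !mulmx1 idQ subrr subr0.
Qed.

Lemma tr_proj_sandwich Q X : proj Q -> \tr (Q *m X *m Q) = \tr (Q *m X).
Proof. by case=> _ idQ; rewrite mxtrace_mulC mulmxA idQ. Qed.

Lemma tr_proj_le Q X Y : proj Q -> psd (Y - X) -> \tr (Q *m X) <= \tr (Q *m Y).
Proof.
move=> projQ /(psd_congr_tr_le Q); case: (projQ) => -> _.
by rewrite !tr_proj_sandwich.
Qed.

Lemma tr_proj_ge0 Q X : proj Q -> psd X -> 0 <= \tr (Q *m X).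
Proof.
move=> projQ /(psd_congr Q) /psd_tr_ge0; case: (projQ) => -> _.
by rewrite tr_proj_sandwich.
Qed.

Lemma tr_proj_sandwich_le Q X : proj Q -> psd X -> \tr (Q *m X *m Q) <= \tr X.
Proof.
move=> projQ psdX; rewrite tr_proj_sandwich //.
have := tr_proj_ge0 (proj_compl projQ) psdX.
by rewrite mulmxBl mul1mx raddfB /= subr_ge0.
Qed.

Lemma proj_eq_of_tr Q Q' : proj Q -> proj Q' -> \tr Q = \tr Q' ->
  \tr (Q' *m (1%:M - Q)) = 0 -> Q' = Q.
Proof.
move=> projQ projQ' trQQ' out0; have [symQ _] := projQ; have [symQ' _] := projQ'.
have Q'_in : (1%:M - Q) *m Q' = 0.
  apply: (psd_congr_tr_eq0 (proj_psd (proj_compl projQ))).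
  by rewrite symQ' tr_proj_sandwich.
have Q'_eq : Q' = Q *m Q'.
  by move/eqP: Q'_in; rewrite mulmxBl mul1mx subr_eq0 => /eqP.
have Q_in : (1%:M - Q') *m Q = 0.
  apply: (psd_congr_tr_eq0 (proj_psd (proj_compl projQ'))).
  rewrite symQ tr_proj_sandwich // mulmxBr mulmx1 raddfB /= -Q'_eq trQQ'.
  by rewrite subrr.
have Q_eq : Q = Q' *m Q.
  by move/eqP: Q_in; rewrite mulmxBl mul1mx subr_eq0 => /eqP.
by have := congr1 trmx Q'_eq; rewrite trmx_mul symQ symQ' -Q_eq.
Qed.

Lemma quadratic_discriminant (p q s : R) : 0 <= p -> 0 <= q ->
  (forall t, 0 <= p - 2 * t * s + t ^+ 2 * q) -> s ^+ 2 <= p * q.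
Proof.
move=> p0 q0 quad_ge0.
have [q_eq0|q_neq0] := eqVneq q 0.
  have [->|s_neq0] := eqVneq s 0; first by rewrite q_eq0 expr0n mulr0.
  have := quad_ge0 ((p + 1) / (2 * s)); rewrite q_eq0 mulr0 addr0.
  have -> : 2 * ((p + 1) / (2 * s)) * s = p + 1 by field.
  by rewrite subr_ge0 => ?; lra.
have q_gt0 : 0 < q by rewrite lt_def q_neq0 q0.
have := quad_ge0 (s / q).
have -> : p - 2 * (s / q) * s + (s / q) ^+ 2 * q = (p * q - s ^+ 2) / q by field.
by rewrite pmulr_lge0 ?invr_gt0 // subr_ge0.
Qed.

Lemma trace_cauchy_schwarz X Y : \tr (X^T *m Y) ^+ 2 <= hs2 X * hs2 Y.
Proof.
apply: quadratic_discriminant; rewrite ?hs2_ge0 // => t.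
have := trace_gram_ge0 (X - t *: Y).
rewrite [(_ - _)^T]raddfB /= linearZ /= mulmxBl !mulmxBr -!scalemxAl -!scalemxAr.
rewrite !raddfB /= !mxtraceZ -[\tr (Y^T *m X)]mxtrace_tr trmx_mul trmxK /hs2.
set a := \tr (X^T *m X); set b := \tr (X^T *m Y); set c := \tr (Y^T *m Y).
suff -> : a - t * b + (- (t * b) - - (t * (t * c))) = a - 2 * t * b + t ^+ 2 * c by [].
by ring.
Qed.

Lemma tr_cauchy_schwarz_left Q E X (s : R) : proj Q ->
  psd (s ^+ 2 *: 1%:M - E *m E^T) -> Q *m X = X ->
  \tr (E^T *m X) ^+ 2 <= \tr Q * s ^+ 2 * hs2 X.
Proof.
move=> projQ EEt_le QX; case: (projQ) => symQ idQ.
have -> : \tr (E^T *m X) = \tr ((Q *m E)^T *m X).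
  by rewrite trmx_mul symQ -mulmxA QX.
apply: (le_trans (trace_cauchy_schwarz _ _)); apply: ler_wpM2r; first exact: hs2_ge0.
rewrite /hs2 trmx_mul symQ -mulmxA (mulmxA Q Q E) idQ mxtrace_mulC -mulmxA.
have := tr_proj_le projQ EEt_le.
by rewrite -scalemxAr mulmx1 mxtraceZ mulrC.
Qed.

Lemma tr_cauchy_schwarz_right Q E X (s : R) : proj Q ->
  psd (s ^+ 2 *: 1%:M - E^T *m E) -> X *m Q = X ->
  \tr (E^T *m X) ^+ 2 <= \tr Q * s ^+ 2 * hs2 X.
Proof.
move=> projQ EtE_le XQ; case: (projQ) => symQ idQ.
have -> : \tr (E^T *m X) = \tr ((E *m Q)^T *m X).
  by rewrite -{1}XQ mulmxA mxtrace_mulC mulmxA trmx_mul symQ.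
apply: (le_trans (trace_cauchy_schwarz _ _)); apply: ler_wpM2r; first exact: hs2_ge0.
have := tr_proj_le projQ EtE_le.
rewrite -scalemxAr mulmx1 mxtraceZ mulrC => /(le_trans _); apply.
by rewrite /hs2 trmx_mul symQ mulmxA mxtrace_mulC !mulmxA idQ -mulmxA.
Qed.

Lemma mxtrace_pid k : (k <= n)%N -> \tr (pid_mx k : 'M[R]_n) = k%:R.
Proof.
move=> kn; rewrite /mxtrace (eq_bigr (fun i : 'I_n => if (i < k)%N then 1 else 0)).
  by rewrite -big_mkcond -(big_ord_widen _ (fun=> 1)) // sumr_const card_ord.
by move=> i _; rewrite mxE eqxx /=; case: ltnP.
Qed.

Lemma mxtrace_idem X : X *m X = X -> \tr X = (\rank X)%:R.
Proof.
move=> idX; set L := col_ebase X; set W := row_ebase X.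
set J := (pid_mx (\rank X) : 'M[R]_n).
have X_ebase : L *m J *m W = X by exact: mulmx_ebase.
have uL : L \in unitmx by exact: col_ebase_unit.
have uW : W \in unitmx by exact: row_ebase_unit.
have JWLJ : J *m (W *m L) *m J = J.
  have : invmx L *m (X *m X) *m invmx W = invmx L *m X *m invmx W by rewrite idX.
  rewrite -{1 2 3}X_ebase !mulmxA mulVmx // mul1mx -!mulmxA mulmxV // mulmx1.
  by rewrite !mulmxA.
have JJ : J *m J = J by rewrite pid_mx_id ?rank_leq_row.
have -> : \tr X = \tr (J *m (W *m L) *m J).
  rewrite -X_ebase mxtrace_mulC mulmxA mxtrace_mulC -{1}JJ.
  by rewrite -mulmxA mxtrace_mulC [RHS]mxtrace_mulC !mulmxA.
by rewrite JWLJ mxtrace_pid // rank_leq_row.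
Qed.

Lemma orth_proj_proj r Q : is_orth_proj r Q -> proj Q.
Proof. by case. Qed.

Lemma orth_proj_tr r Q : is_orth_proj r Q -> \tr Q = r%:R.
Proof. by case=> _ idQ <-; apply: mxtrace_idem. Qed.

Lemma hs2_proj_mul Q X : proj Q -> hs2 (Q *m X) = \tr (Q *m (X *m X^T)).
Proof.
by case=> symQ idQ; rewrite /hs2 trmx_mul symQ -mulmxA (mulmxA Q Q) idQ mxtrace_mulC mulmxA.
Qed.

Lemma hs2_tr_mul Z X : hs2 (Z^T *m X) = \tr (Z^T *m (X *m X^T) *m Z).
Proof. by rewrite /hs2 trmx_mul trmxK mxtrace_mulC !mulmxA mxtrace_mulC !mulmxA. Qed.

End PsdMatrices.

Section SpectralMatrices.
Variables (R : rcfType) (n : nat).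
Implicit Types (U : 'M[R]_n) (w : 'I_n -> R).

Definition spec U w := U *m diag_mx (\row_i w i) *m U^T.

Lemma eq_spec U w w' : (forall i, w i = w' i) -> spec U w = spec U w'.
Proof.
by move=> ww'; congr (_ *m diag_mx _ *m _); apply/rowP => i; rewrite !mxE ww'.
Qed.

Lemma spec_sym U w : (spec U w)^T = spec U w.
Proof. by rewrite /spec !trmx_mul trmxK tr_diag_mx mulmxA. Qed.

Lemma spec_mul U w w' : U^T *m U = 1%:M ->
  spec U w *m spec U w' = spec U (fun i => w i * w' i).
Proof.
move=> oU; rewrite /spec !mulmxA -[U *m _ *m U^T *m U]mulmxA oU mulmx1.
rewrite -[U *m _ *m _]mulmxA mulmx_diag.
by congr (_ *m diag_mx _ *m _); apply/rowP => i; rewrite !mxE.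
Qed.

Lemma spec_add U w w' : spec U w + spec U w' = spec U (fun i => w i + w' i).
Proof.
rewrite /spec -mulmxDl -mulmxDr -linearD /=.
by congr (_ *m diag_mx _ *m _); apply/rowP => i; rewrite !mxE.
Qed.

Lemma spec_sub U w w' : spec U w - spec U w' = spec U (fun i => w i - w' i).
Proof.
rewrite /spec -mulmxBl -mulmxBr -linearB /=.
by congr (_ *m diag_mx _ *m _); apply/rowP => i; rewrite !mxE.
Qed.

Lemma spec_scale U w c : c *: spec U w = spec U (fun i => c * w i).
Proof.
rewrite /spec scalemxAl scalemxAr -linearZ /=.
by congr (_ *m diag_mx _ *m _); apply/rowP => i; rewrite !mxE.
Qed.

Lemma spec_const U c : U *m U^T = 1%:M -> spec U (fun=> c) = c%:M.
Proof.
move=> oU; rewrite /spec.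
have -> : \row_(i < n) c = const_mx c by apply/rowP => i; rewrite !mxE.
by rewrite diag_const_mx mul_mx_scalar -scalemxAl oU scalemx1.
Qed.

Lemma spec_tr U (f : nat -> R) : U^T *m U = 1%:M ->
  \tr (spec U (fun i => f i)) = \sum_(0 <= i < n) f i.
Proof.
move=> oU; rewrite /spec mxtrace_mulC mulmxA oU mul1mx mxtrace_diag big_mkord.
by apply: eq_bigr => i _; rewrite mxE.
Qed.

Lemma spec_psd U w : (forall i, 0 <= w i) -> psd (spec U w).
Proof.
move=> w_ge0; exists n, (diag_mx (\row_i Num.sqrt (w i)) *m U^T).
rewrite trmx_mul trmxK tr_diag_mx /spec !mulmxA.
rewrite -[_ *m diag_mx _ *m diag_mx _]mulmxA mulmx_diag.
by congr (_ *m diag_mx _ *m _); apply/rowP => i; rewrite !mxE -expr2 sqr_sqrtr.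
Qed.

End SpectralMatrices.

Section ScalarInequalities.
Variable R : realFieldType.

Lemma le_minn_mul (t k : R) (u v : nat) :
  t <= u%:R * k -> t <= v%:R * k -> t <= (minn u v)%:R * k.
Proof. by case: leqP. Qed.

Lemma le_of_sqr_le (u v : R) : 0 <= v -> u ^+ 2 <= v ^+ 2 -> u <= v.
Proof. by move=> v0 uv; case: (lerP u v) => // vu; exfalso; nra. Qed.

(* Here X and Y
   stand for |X1| and |X2|, sh for the square root of the projection defect,
   and T for the cross term, bounded by a (X + Y). *)
Lemma scalar_bound_I (X Y a l sh sr T : R) :
  0 <= X -> 0 <= Y -> 0 <= a -> 0 <= l -> 0 <= sh -> sh <= sr ->
  X <= l * sh -> Y <= l * sh -> X <= Y -> T <= a * (X + Y) ->
  X ^+ 2 - Y ^+ 2 + 2 * T <= 4 * a * l * sr.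
Proof.
move=> X0 Y0 a0 l0 sh0 sh_sr Xl Yl XY TaXY.
have XY2 : X ^+ 2 <= Y ^+ 2 by rewrite ler_pXn2r // nnegrE.
have h1 : a * (X + Y) <= a * (2 * (l * sh)) by apply: ler_wpM2l => //; lra.
have h2 : a * (l * sh) <= a * (l * sr) by apply: ler_wpM2l; [|apply: ler_wpM2l].
nra.
Qed.

Lemma scalar_bound_II (X Y a l sh b c T : R) :
  0 <= X -> 0 <= Y -> 0 <= a -> 0 <= l -> 0 <= sh -> b < c ->
  X <= l * sh -> Y <= l * sh -> X ^+ 2 <= b * sh ^+ 2 -> c * sh ^+ 2 <= Y ^+ 2 ->
  T <= a * (X + Y) ->
  X ^+ 2 - Y ^+ 2 + 2 * T <= 4 * a ^+ 2 * (l ^+ 2 / (c - b)).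
Proof.
move=> X0 Y0 a0 l0 sh0 bc Xl Yl Xb Yc TaXY.
set g := c - b; have g0 : 0 < g by rewrite subr_gt0.
suff : g * (X ^+ 2 - Y ^+ 2 + 2 * T) <= 4 * a ^+ 2 * l ^+ 2.
  by move=> H; rewrite mulrA ler_pdivlMr // mulrC.
have gap : X ^+ 2 - Y ^+ 2 <= - g * sh ^+ 2 by rewrite /g; lra.
have h1 : g * (X ^+ 2 - Y ^+ 2) <= g * (- g * sh ^+ 2) by apply: ler_wpM2l => //; lra.
have h2 : g * (2 * T) <= g * (4 * a * l * sh) by apply: ler_wpM2l; [lra | nra].
have : 0 <= (g * sh - 2 * a * l) ^+ 2 by apply: sqr_ge0.
nra.
Qed.

Lemma scalar_bound_III (X Y a sD T : R) :
  0 <= X -> 0 <= Y -> 0 <= a -> 0 <= sD -> X <= Y -> X <= sD -> T <= a * (X + Y) ->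
  X ^+ 2 - Y ^+ 2 + 2 * T <= Num.max (4 * a * sD) (4 * a ^+ 2).
Proof.
move=> X0 Y0 a0 sD0 XY XD TaXY.
have T2 : 2 * T <= 2 * a * X + 2 * a * Y by lra.
rewrite le_max; case: (leP a sD) => [a_sD|sD_a]; apply/orP; [left|right].
  case: (leP Y sD) => [YD|DY].
    have : a * X <= a * Y by apply: ler_wpM2l.
    have : a * Y <= a * sD by apply: ler_wpM2l.
    nra.
  have : X ^+ 2 + 2 * a * X <= sD ^+ 2 + 2 * a * sD.
    have : a * X <= a * sD by apply: ler_wpM2l.
    nra.
  have : 0 <= (Y - sD) * (Y + sD - 2 * a) by apply: mulr_ge0; lra.
  nra.
have : a * X <= a * a by apply: ler_wpM2l => //; lra.
have : 0 <= (Y - a) ^+ 2 by apply: sqr_ge0.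
nra.
Qed.

End ScalarInequalities.

Section SingularValues.
Variable R : rcfType.

Lemma nth_ge0 (s : seq R) : all (fun x => 0 <= x) s -> forall i, 0 <= s`_i.
Proof.
move=> /allP s_ge0 i; case: (ltnP i (size s)) => [i_lt|i_ge].
  by apply: s_ge0; apply: mem_nth.
by rewrite nth_default.
Qed.

Lemma nth_noninc (s : seq R) : sorted (fun x y => y <= x) s ->
  all (fun x => 0 <= x) s -> forall i j, (i <= j)%N -> s`_j <= s`_i.
Proof.
move=> s_sorted s_ge0 i j ij; case: (ltnP j (size s)) => [j_lt|j_ge].
  have ge_trans : transitive (fun x y : R => y <= x).
    by move=> x y z /= yx zy; apply: le_trans yx.
  apply: (@sorted_leq_nth R _ ge_trans _ 0 s s_sorted i j) => //.
  exact: leq_ltn_trans j_lt.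
by rewrite (nth_default _ j_ge); apply: nth_ge0.
Qed.

Lemma nth_sqr_noninc (s : seq R) : sorted (fun x y => y <= x) s ->
  all (fun x => 0 <= x) s -> forall i j, (i <= j)%N -> s`_j ^+ 2 <= s`_i ^+ 2.
Proof.
move=> s_sorted s_ge0 i j ij.
by rewrite ler_pXn2r ?nnegrE ?nth_ge0 ?nth_noninc.
Qed.

Lemma Delta_shift (s : seq R) r : Delta s r = \sum_(r <= i < 2 * r) s`_i ^+ 2.
Proof.
rewrite /Delta -addn1 -[(2 * r).+1]addn1 big_addn addnK.
by apply: eq_big_nat => i _; rewrite /lam_ addn1.
Qed.

Variable n : nat.

Lemma gram_svd (C U V : 'M[R]_n) (s : seq R) :
  U^T *m U = 1%:M -> V^T *m V = 1%:M -> C = U *m diag_mx (\row_i s`_i) *m V^T ->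
  C *m C^T = spec U (fun i => s`_i ^+ 2) /\ C^T *m C = spec V (fun i => s`_i ^+ 2).
Proof.
move=> oU oV ->; rewrite !trmx_mul !trmxK tr_diag_mx /spec !mulmxA.
rewrite -(mulmxA _ V^T V) oV -(mulmxA _ U^T U) oU !mulmx1.
rewrite -!(mulmxA _ (diag_mx _) (diag_mx _)) !mulmx_diag.
by split; congr (_ *m diag_mx _ *m _); apply/rowP => i; rewrite !mxE expr2.
Qed.

Lemma spec_le_top (U : 'M[R]_n) (s : seq R) : U^T *m U = 1%:M ->
  sorted (fun x y => y <= x) s -> all (fun x => 0 <= x) s ->
  psd (s`_0 ^+ 2 *: 1%:M - spec U (fun i => s`_i ^+ 2)).
Proof.
move=> oU s_sorted s_ge0; rewrite scalemx1 -(spec_const _ (mulmx1C oU)) spec_sub.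
by apply: spec_psd => i; rewrite subr_ge0 nth_sqr_noninc.
Qed.

Lemma svals_top_bound (E : 'M[R]_n) (s : seq R) : is_svals E s ->
  psd (s`_0 ^+ 2 *: 1%:M - E *m E^T) /\ psd (s`_0 ^+ 2 *: 1%:M - E^T *m E).
Proof.
case=> _ s_sorted s_ge0 [U [V [oU oV E_svd]]].
have [-> ->] := gram_svd oU oV E_svd.
by split; apply: spec_le_top.
Qed.

Lemma diag_sqr_commute (Q : 'M[R]_n) (d : 'I_n -> R) : (forall i, 0 <= d i) ->
  Q *m diag_mx (\row_i d i ^+ 2) = diag_mx (\row_i d i ^+ 2) *m Q ->
  Q *m diag_mx (\row_i d i) = diag_mx (\row_i d i) *m Q.
Proof.
move=> d_ge0 comm2; apply/matrixP => i j; rewrite mul_mx_diag mul_diag_mx !mxE.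
move/matrixP: comm2 => /(_ i j); rewrite mul_mx_diag mul_diag_mx !mxE => comm2ij.
have [->|Qij_neq0] := eqVneq (Q i j) 0; first by rewrite mulr0 mul0r.
have /eqP : d j ^+ 2 = d i ^+ 2 by apply: (mulfI Qij_neq0); rewrite comm2ij mulrC.
rewrite eqf_sqr => /orP[/eqP ->|/eqP dj]; first by rewrite mulrC.
have di_ge0 := d_ge0 i; have dj_ge0 := d_ge0 j.
have di0 : d i = 0 by lra.
have dj0 : d j = 0 by lra.
by rewrite di0 dj0 mulr0 mul0r.
Qed.

End SingularValues.

Section Proposition.
Variables (R : rcfType) (n r : nat) (C E pi P U V : 'M[R]_n) (lam sE : seq R).
Hypotheses (r_le_n : (r <= n)%N) (lam_size : size lam = n)
  (lam_sorted : sorted (fun x y => y <= x) lam) (lam_ge0 : all (fun x => 0 <= x) lam)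
  (oU : U^T *m U = 1%:M) (oV : V^T *m V = 1%:M)
  (C_svd : C = U *m diag_mx (\row_i lam`_i) *m V^T)
  (E_svals : is_svals E sE)
  (pi_rank : is_orth_proj r pi)
  (pi_max : forall Q, is_orth_proj r Q -> hs2 (Q *m C) <= hs2 (pi *m C))
  (P_rank : is_orth_proj r P).

Local Notation A := (C *m C^T).

(* a i = lambda_(i+1)^2 are the eigenvalues of A, c = lambda_r^2, and Sr is
   the sum of the r largest of them. *)
Let a i := lam`_i ^+ 2.
Let c := a r.-1.
Let Sr := \sum_(0 <= i < r) a i.

Lemma a_noninc i j : (i <= j)%N -> a j <= a i.
Proof. exact: nth_sqr_noninc. Qed.

Lemma CCt_spec : A = spec U (fun i => lam`_i ^+ 2).
Proof. by have [] := gram_svd oU oV C_svd. Qed.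

Lemma UUt : U *m U^T = 1%:M.
Proof. exact: mulmx1C. Qed.

Lemma pi_proj : proj pi. Proof. exact: orth_proj_proj pi_rank. Qed.
Lemma tr_pi : \tr pi = r%:R. Proof. exact: orth_proj_tr pi_rank. Qed.
Lemma P_proj : proj P. Proof. exact: orth_proj_proj P_rank. Qed.
Lemma tr_P : \tr P = r%:R. Proof. exact: orth_proj_tr P_rank. Qed.

Definition top_proj := spec U (fun i => ((i < r)%N)%:R).

Lemma top_proj_proj : proj top_proj.
Proof.
split; first exact: spec_sym.
by rewrite spec_mul //; apply: eq_spec => i; case: (i < r)%N; rewrite ?mul1r ?mul0r.
Qed.

Lemma tr_top_proj : \tr top_proj = r%:R.
Proof.
rewrite (spec_tr (fun i => ((i < r)%N)%:R)) // (sum_nat_trunc (k := r)).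
  by rewrite (eq_big_nat _ _ (F2 := fun=> 1)) ?sumr_const_nat ?subn0 // => i /andP[_ ->].
by move=> i; rewrite (minn_idPr r_le_n) => r_le_i _; rewrite ltnNge r_le_i.
Qed.

Lemma top_proj_rank : is_orth_proj r top_proj.
Proof.
have [sym_top id_top] := top_proj_proj; split => //.
by apply/eqP; rewrite -(eqr_nat R) -mxtrace_idem ?tr_top_proj.
Qed.

Lemma tr_top_proj_CCt : \tr (top_proj *m A) = Sr.
Proof.
rewrite CCt_spec spec_mul // (spec_tr (fun i => ((i < r)%N)%:R * a i)) //.
rewrite (sum_nat_trunc (k := r)); last first.
  by move=> i; rewrite (minn_idPr r_le_n) => r_le_i _; rewrite ltnNge r_le_i mul0r.
by apply: eq_big_nat => i /andP[_ ->]; rewrite mul1r.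
Qed.

Lemma pi_beats_top : \tr (top_proj *m A) <= \tr (pi *m A).
Proof.
rewrite -!hs2_proj_mul; first exact: pi_max top_proj_rank.
  exact: pi_proj.
exact: top_proj_proj.
Qed.

Definition excess := spec U (fun i => Num.max (a i - c) 0).
Definition deficit := spec U (fun i => Num.max (c - a i) 0).

Lemma CCt_split : A = c *: 1%:M + excess - deficit.
Proof.
rewrite CCt_spec scalemx1 -(spec_const c UUt) spec_add spec_sub; apply: eq_spec => i.
rewrite /a; set x := lam`_i ^+ 2; case: (leP c x) => cx.
  by rewrite (max_idPl _) ?subr_ge0 // (max_idPr _) ?subr_le0 //; ring.
by rewrite (max_idPr _) ?subr_le0 ?(ltW cx) // (max_idPl _) ?subr_ge0 ?(ltW cx) //; ring.
Qed.

Lemma tr_excess : \tr excess = Sr - c * r%:R.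
Proof.
rewrite (spec_tr (fun i => Num.max (a i - c) 0)) // (sum_nat_trunc (k := r)); last first.
  move=> i; rewrite (minn_idPr r_le_n) => r_le_i _; apply/max_idPr.
  by rewrite subr_le0 a_noninc // (leq_trans (leq_pred r)).
rewrite (eq_big_nat _ _ (F2 := fun i => a i - c)); last first.
  move=> i /andP[_ i_lt_r]; apply/max_idPl; rewrite subr_ge0 a_noninc //.
  by rewrite -ltnS (ltn_predK i_lt_r).
by rewrite sumrB sumr_const_nat subn0 mulr_natr.
Qed.

Lemma excess_psd : psd excess.
Proof. by apply: spec_psd => i; rewrite le_max lexx orbT. Qed.

Lemma deficit_psd : psd deficit.
Proof. by apply: spec_psd => i; rewrite le_max lexx orbT. Qed.

Lemma maximizer_splits :
  [/\ \tr (pi *m A) = Sr, excess *m (1%:M - pi) = 0 & deficit *m pi = 0].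
Proof.
have projC := proj_compl pi_proj; have [sym_pi _] := pi_proj; have [symC _] := projC.
have out_ge0 := tr_proj_ge0 projC excess_psd.
have in_ge0 := tr_proj_ge0 pi_proj deficit_psd.
have tr_piA : \tr (pi *m A) = c * r%:R + \tr excess
    - \tr ((1%:M - pi) *m excess) - \tr (pi *m deficit).
  rewrite CCt_split mulmxBr mulmxDr !raddfB !raddfD /= -scalemxAr mulmx1 mxtraceZ.
  by rewrite tr_pi mulmxBl mul1mx raddfB /=; ring.
have beats := pi_beats_top.
rewrite tr_top_proj_CCt tr_piA tr_excess in beats.
have out0 : \tr ((1%:M - pi) *m excess) = 0 by apply/eqP; rewrite eq_le out_ge0 andbT; lra.
have in0 : \tr (pi *m deficit) = 0 by apply/eqP; rewrite eq_le in_ge0 andbT; lra.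
split; first by rewrite tr_piA out0 in0 tr_excess; ring.
  by apply: (psd_congr_tr_eq0 excess_psd); rewrite symC tr_proj_sandwich.
by apply: (psd_congr_tr_eq0 deficit_psd); rewrite sym_pi (tr_proj_sandwich _ pi_proj).
Qed.

Lemma maximizer_absorbs :
  [/\ pi *m excess = excess, excess *m pi = excess, pi *m deficit = 0 & deficit *m pi = 0].
Proof.
have [_ ex_out def_in] := maximizer_splits; have [sym_pi _] := pi_proj.
have ex_pi : excess *m pi = excess.
  by apply/eqP; rewrite eq_sym -subr_eq0 -{1}[excess]mulmx1 -mulmxBr ex_out.
split=> //.
  by rewrite -[excess]spec_sym -sym_pi -trmx_mul ex_pi spec_sym.
by rewrite -[deficit]spec_sym -sym_pi -trmx_mul def_in trmx0.
Qed.

Lemma maximizer_commutes : pi *m A = A *m pi.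
Proof.
have [pi_ex ex_pi pi_def def_pi] := maximizer_absorbs.
rewrite CCt_split mulmxBr mulmxDr mulmxBl mulmxDl pi_ex ex_pi pi_def def_pi.
by rewrite -scalemxAr -scalemxAl mulmx1 mul1mx.
Qed.

Lemma maximizer_is_top : a r < c -> pi = top_proj.
Proof.
move=> gap; have [_ _ pi_def _] := maximizer_absorbs.
have deficit_ge : psd (deficit - (c - a r) *: (1%:M - top_proj)).
  rewrite -(spec_const 1 UUt) spec_sub spec_scale /deficit spec_sub.
  apply: spec_psd => i; case: (ltnP i r) => ir; rewrite ?subrr ?subr0 ?mulr0 ?mulr1.
    by rewrite subr0 le_max lexx orbT.
  by rewrite subr_ge0 le_max lerD2l lerN2 a_noninc.
apply: proj_eq_of_tr top_proj_proj pi_proj _ _; first by rewrite tr_top_proj tr_pi.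
have := tr_proj_le pi_proj deficit_ge.
rewrite pi_def mxtrace0 -scalemxAr mxtraceZ => le0.
apply/eqP; rewrite eq_le (tr_proj_ge0 pi_proj (proj_psd (proj_compl top_proj_proj))) andbT.
have gap0 : 0 < c - a r by rewrite subr_gt0.
by rewrite -(pmulr_rle0 _ gap0).
Qed.

Definition defect := \tr (P *m (1%:M - pi)).
Definition X1 := P *m (1%:M - pi) *m C.
Definition X2 := (1%:M - P) *m pi *m C.

Lemma X1_gram : X1 = ((1%:M - pi) *m P)^T *m C.
Proof.
have [symC _] := proj_compl pi_proj; have [symP _] := P_proj.
by rewrite trmx_mul symC symP.
Qed.

Lemma X2_gram : X2 = (pi *m (1%:M - P))^T *m C.
Proof.
have [symC _] := proj_compl P_proj; have [sym_pi _] := pi_proj.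
by rewrite trmx_mul symC sym_pi.
Qed.

Lemma X1_congr Z : ((1%:M - pi) *m P)^T *m Z *m ((1%:M - pi) *m P)
  = P *m ((1%:M - pi) *m Z *m (1%:M - pi)) *m P.
Proof.
have [symC _] := proj_compl pi_proj; have [symP _] := P_proj.
by rewrite trmx_mul symC symP !mulmxA.
Qed.

Lemma X2_congr Z : (pi *m (1%:M - P))^T *m Z *m (pi *m (1%:M - P))
  = (1%:M - P) *m (pi *m Z *m pi) *m (1%:M - P).
Proof.
have [symC _] := proj_compl P_proj; have [sym_pi _] := pi_proj.
by rewrite trmx_mul symC sym_pi !mulmxA.
Qed.

Lemma cross_split :
  \tr (E^T *m (P - pi) *m C) = \tr (E^T *m X1) - \tr (E^T *m X2).
Proof.
rewrite -raddfB /= -mulmxBr -mulmxA /X1 /X2 -mulmxBl.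
by rewrite !mulmxBr !mulmxBl !mulmx1 !mul1mx opprB addrA subrK.
Qed.

Lemma defect_alt : defect = r%:R - \tr (P *m pi).
Proof. by rewrite /defect mulmxBr mulmx1 raddfB /= tr_P. Qed.

Lemma defect_sym : \tr ((1%:M - P) *m pi) = defect.
Proof. by rewrite defect_alt mulmxBl mul1mx raddfB /= tr_pi mxtrace_mulC. Qed.

Lemma defect_ge0 : 0 <= defect.
Proof. exact: tr_proj_ge0 P_proj (proj_psd (proj_compl pi_proj)). Qed.

Lemma defect_le_rM : defect <= (minn r (n - r))%:R.
Proof.
have P_pi_ge0 := tr_proj_ge0 P_proj (proj_psd pi_proj).
have compl_ge0 := tr_proj_ge0 (proj_compl pi_proj) (proj_psd (proj_compl P_proj)).
have defect_compl : defect = (n - r)%:R - \tr ((1%:M - pi) *m (1%:M - P)).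
  rewrite /defect !mulmxBr !mulmxBl !mulmx1 !mul1mx !raddfB /= mxtrace1 tr_pi tr_P.
  by rewrite natrB // [\tr (pi *m P)]mxtrace_mulC; ring.
case: leqP => _; first by rewrite defect_alt; lra.
by rewrite defect_compl; lra.
Qed.

Lemma gram_X1_coef : \tr (((1%:M - pi) *m P)^T *m ((1%:M - pi) *m P)) = defect.
Proof.
have [symC idC] := proj_compl pi_proj; have [symP _] := P_proj.
rewrite trmx_mul symC symP !mulmxA -(mulmxA P) idC.
exact: tr_proj_sandwich P_proj.
Qed.

Lemma gram_X2_coef : \tr ((pi *m (1%:M - P))^T *m (pi *m (1%:M - P))) = defect.
Proof.
have [symC _] := proj_compl P_proj; have [sym_pi id_pi] := pi_proj.
rewrite trmx_mul symC sym_pi !mulmxA -(mulmxA _ pi pi) id_pi.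
by rewrite (tr_proj_sandwich _ (proj_compl P_proj)) defect_sym.
Qed.

Lemma hs2_le_top_defect Z : \tr (Z^T *m Z) = defect -> hs2 (Z^T *m C) <= a 0 * defect.
Proof.
move=> trZZ; have A_le : psd (a 0 *: 1%:M - A) by rewrite CCt_spec; apply: spec_le_top.
rewrite hs2_tr_mul; apply: le_trans (psd_congr_tr_le Z A_le) _.
by rewrite -scalemxAr mulmx1 -scalemxAl mxtraceZ trZZ.
Qed.

Lemma hs2_X1_le : hs2 X1 <= a 0 * defect.
Proof. by rewrite X1_gram; apply/hs2_le_top_defect/gram_X1_coef. Qed.

Lemma hs2_X2_le : hs2 X2 <= a 0 * defect.
Proof. by rewrite X2_gram; apply/hs2_le_top_defect/gram_X2_coef. Qed.

(* Since pi commutes with A, the gain of P over pi splits as |X1|^2 - |X2|^2;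
   maximality of pi then gives |X1| <= |X2|. *)
Lemma hs2_diff : hs2 (P *m C) - hs2 (pi *m C) = hs2 X1 - hs2 X2.
Proof.
have [_ idCpi] := proj_compl pi_proj; have [_ id_pi] := pi_proj.
have Cpi_A : (1%:M - pi) *m A *m (1%:M - pi) = A *m (1%:M - pi).
  have -> : (1%:M - pi) *m A = A *m (1%:M - pi).
    by rewrite mulmxBl mulmxBr mul1mx mulmx1 maximizer_commutes.
  by rewrite -mulmxA idCpi.
have pi_A : pi *m A *m pi = A *m pi by rewrite maximizer_commutes -mulmxA id_pi.
rewrite (hs2_proj_mul _ P_proj) (hs2_proj_mul _ pi_proj) X1_gram X2_gram !hs2_tr_mul.
rewrite X1_congr X2_congr Cpi_A pi_A (tr_proj_sandwich _ P_proj).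
rewrite (tr_proj_sandwich _ (proj_compl P_proj)).
rewrite !mulmxBr !mulmx1 !mulmxBl !mul1mx !raddfB /= [\tr (A *m pi)]mxtrace_mulC.
by rewrite -!mulmxA; ring.
Qed.

Lemma hs2_X1_le_X2 : hs2 X1 <= hs2 X2.
Proof. by rewrite -subr_le0 -hs2_diff subr_le0; apply: pi_max P_rank. Qed.

(* On the right, pi C = C pih for the rank-r projection pih = V U^T pi U V^T:
   U^T pi U commutes with diag(lambda^2), hence with diag(lambda). *)
Definition pih := V *m (U^T *m pi *m U) *m V^T.

Lemma pi_C : pi *m C = C *m pih.
Proof.
set Pi := U^T *m pi *m U.
have Pi_diag : Pi *m diag_mx (\row_i lam`_i) = diag_mx (\row_i lam`_i) *m Pi.
  apply: diag_sqr_commute => [i|]; first exact: nth_ge0.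
  have := congr1 (fun X => U^T *m X *m U) maximizer_commutes.
  rewrite CCt_spec /spec /Pi !mulmxA oU mul1mx -!mulmxA oU mulmx1 !mulmxA.
  by congr (_ *m _ = _ *m _); congr diag_mx; apply/rowP => i; rewrite !mxE.
have pi_U : pi *m U = U *m Pi by rewrite /Pi !mulmxA UUt mul1mx.
rewrite C_svd /pih !mulmxA pi_U -(mulmxA U Pi) Pi_diag.
by rewrite -!mulmxA (mulmxA V^T V) oV mul1mx.
Qed.

Lemma pih_proj : proj pih.
Proof.
have [sym_pi id_pi] := pi_proj; split.
  by rewrite /pih !trmx_mul !trmxK sym_pi !mulmxA.
rewrite /pih !mulmxA -(mulmxA _ V^T V) oV mulmx1 -(mulmxA _ U U^T) UUt mulmx1.
by rewrite -(mulmxA _ pi pi) id_pi.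
Qed.

Lemma tr_pih : \tr pih = r%:R.
Proof.
rewrite /pih mxtrace_mulC !mulmxA oV mul1mx mxtrace_mulC mulmxA UUt mul1mx.
exact: tr_pi.
Qed.

Lemma tr_compl_rank (Q : 'M[R]_n) : \tr Q = r%:R -> \tr (1%:M - Q) = (n - r)%:R.
Proof. by move=> trQ; rewrite raddfB /= mxtrace1 trQ natrB. Qed.

(* X1 maps into range P (rank r) from range (1 - pih) (rank n - r) and X2
   maps into range (1 - P) from range pih: so the cross term with E is
   controlled by min(r, n - r) and the top singular value s of E. *)
Lemma X1_ranges : P *m X1 = X1 /\ X1 *m (1%:M - pih) = X1.
Proof.
have [_ idP] := P_proj; have [_ idC] := proj_compl pih_proj.
split; first by rewrite /X1 !mulmxA idP.
have -> : X1 = P *m C *m (1%:M - pih).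
  by rewrite /X1 !mulmxBr !mulmxBl !mulmx1 -!mulmxA pi_C.
by rewrite -mulmxA idC.
Qed.

Lemma X2_ranges : (1%:M - P) *m X2 = X2 /\ X2 *m pih = X2.
Proof.
have [_ idC] := proj_compl P_proj; have [_ id_pih] := pih_proj.
split; first by rewrite /X2 !mulmxA idC.
have -> : X2 = (1%:M - P) *m C *m pih by rewrite /X2 -mulmxA pi_C mulmxA.
by rewrite -mulmxA id_pih.
Qed.

Let rM : R := (minn r (n - r))%:R.
Let s := sE`_0.

Lemma cross_X1_le : \tr (E^T *m X1) ^+ 2 <= rM * s ^+ 2 * hs2 X1.
Proof.
have [EEt_le EtE_le] := svals_top_bound E_svals; have [P_X1 X1_pih] := X1_ranges.
rewrite -mulrA; apply: le_minn_mul; rewrite mulrA.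
  by rewrite -tr_P; apply: tr_cauchy_schwarz_left P_proj EEt_le P_X1.
rewrite -(tr_compl_rank tr_pih).
exact: tr_cauchy_schwarz_right (proj_compl pih_proj) EtE_le X1_pih.
Qed.

Lemma cross_X2_le : \tr (E^T *m X2) ^+ 2 <= rM * s ^+ 2 * hs2 X2.
Proof.
have [EEt_le EtE_le] := svals_top_bound E_svals; have [P_X2 X2_pih] := X2_ranges.
rewrite -mulrA; apply: le_minn_mul; rewrite mulrA.
  by rewrite -tr_pih; apply: tr_cauchy_schwarz_right pih_proj EtE_le X2_pih.
rewrite -(tr_compl_rank tr_P).
exact: tr_cauchy_schwarz_left (proj_compl P_proj) EEt_le P_X2.
Qed.

(* Bound by Delta_r: with e = lambda_(2r)^2, A <= e + tail where the tail
   keeps the eigenvalues above e; tr(pi A) = Sr then leaves for |X1|^2 at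
   most the eigenvalues lambda_(r+1)^2, ..., lambda_(2r)^2. *)
Let e := a (2 * r).-1.

Definition tail := spec U (fun i => Num.max (a i - e) 0).

Lemma tr_tail : \tr tail = \sum_(0 <= i < 2 * r) (a i - e).
Proof.
rewrite (spec_tr (fun i => Num.max (a i - e) 0)) // (sum_nat_trunc (k := 2 * r)).
  apply: eq_big_nat => i /andP[_ i_lt]; apply/max_idPl; rewrite subr_ge0 a_noninc //.
  by rewrite -ltnS (ltn_predK i_lt).
move=> i min_le_i _; apply/max_idPr; rewrite subr_le0.
case: (leqP (2 * r) i) => [r2_le_i|i_lt_r2].
  by rewrite a_noninc // (leq_trans (leq_pred _)).
have n_le_i : (n <= i)%N.
  case: (leqP n (2 * r)) => [n_le_r2|r2_lt_n]; first by rewrite (minn_idPl n_le_r2) in min_le_i.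
  by rewrite (minn_idPr (ltnW r2_lt_n)) leqNgt i_lt_r2 in min_le_i.
by rewrite /a nth_default ?lam_size // expr0n sqr_ge0.
Qed.

Lemma tail_bound : psd (tail - (A - e *: 1%:M)).
Proof.
rewrite CCt_spec scalemx1 -(spec_const e UUt) /tail !spec_sub.
by apply: spec_psd => i; rewrite subr_ge0 le_max lexx.
Qed.

Lemma tr_compl_tail :
  \tr ((1%:M - pi) *m tail) <= \sum_(r <= i < 2 * r) a i - e * r%:R.
Proof.
have [tr_piA _ _] := maximizer_splits.
have := tr_proj_le pi_proj tail_bound.
rewrite mulmxBr raddfB /= -scalemxAr mulmx1 mxtraceZ tr_pi tr_piA.
rewrite mulmxBl mul1mx raddfB /= tr_tail.
have split_sum : \sum_(0 <= i < 2 * r) (a i - e)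
    = Sr + \sum_(r <= i < 2 * r) a i - e * (2 * r)%:R.
  rewrite sumrB sumr_const_nat subn0 (@big_cat_nat _ _ _ r 0 (2 * r)) //=.
    by rewrite mulr_natr.
  by rewrite mul2n -addnn leq_addr.
rewrite split_sum natrM; lra.
Qed.

Lemma hs2_X1_le_Delta : hs2 X1 <= \sum_(r <= i < 2 * r) a i.
Proof.
have [symC _] := proj_compl pi_proj.
have A_le : psd (tail + e *: 1%:M - A).
  by have := tail_bound; rewrite opprB addrA addrAC.
have tail_psd : psd tail by apply: spec_psd => i; rewrite le_max lexx orbT.
have Ctail_psd : psd ((1%:M - pi) *m tail *m (1%:M - pi)).
  by have := psd_congr (1%:M - pi) tail_psd; rewrite symC.
have e_defect : e * defect <= e * r%:R.
  apply: ler_wpM2l; first exact: sqr_ge0.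
  by rewrite defect_alt; have := tr_proj_ge0 P_proj (proj_psd pi_proj); lra.
rewrite X1_gram hs2_tr_mul; apply: le_trans (psd_congr_tr_le _ A_le) _.
rewrite mulmxDr mulmxDl raddfD /= -scalemxAr mulmx1 -scalemxAl mxtraceZ gram_X1_coef.
rewrite X1_congr; have := tr_proj_sandwich_le P_proj Ctail_psd.
rewrite (tr_proj_sandwich _ (proj_compl pi_proj)).
by have := tr_compl_tail; lra.
Qed.

(* Under a spectral gap, pi is the top projection and X1, X2 see only the
   eigenvalues below, respectively above, the gap. *)
Lemma gap_X1 : a r < c -> hs2 X1 <= a r * defect.
Proof.
move=> gap; have pi_top := maximizer_is_top gap; have [symP _] := P_proj.
rewrite X1_gram hs2_tr_mul X1_congr.
have low : psd (a r *: (1%:M - pi) - (1%:M - pi) *m A *m (1%:M - pi)).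
  rewrite pi_top -(spec_const 1 UUt) spec_sub CCt_spec !spec_mul // spec_scale spec_sub.
  apply: spec_psd => i; case: (ltnP i r) => ir /=; first by lra.
  by have := a_noninc ir; rewrite /a; lra.
have := psd_congr_tr_le P low; rewrite symP -scalemxAr -scalemxAl mxtraceZ.
by rewrite !(tr_proj_sandwich _ P_proj).
Qed.

Lemma gap_X2 : a r < c -> c * defect <= hs2 X2.
Proof.
move=> gap; have pi_top := maximizer_is_top gap; have [symCP _] := proj_compl P_proj.
rewrite X2_gram hs2_tr_mul X2_congr.
have high : psd (pi *m A *m pi - c *: pi).
  rewrite pi_top /top_proj CCt_spec !spec_mul // spec_scale spec_sub.
  apply: spec_psd => i; case: (ltnP i r) => ir /=; last by lra.
  have : a r.-1 <= a i by apply: a_noninc; rewrite -ltnS (ltn_predK ir).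
  by rewrite /c /a; lra.
have := psd_congr_tr_le (1%:M - P) high; rewrite symCP -scalemxAr -scalemxAl mxtraceZ.
by rewrite !(tr_proj_sandwich _ (proj_compl P_proj)) defect_sym.
Qed.

Let x := Num.sqrt (hs2 X1).
Let y := Num.sqrt (hs2 X2).
Let d := Num.sqrt defect.
Let cross := \tr (E^T *m X1) - \tr (E^T *m X2).
Let gain := Num.sqrt rM * s.

Lemma rM_ge0 : 0 <= rM. Proof. exact: ler0n. Qed.

Lemma s_ge0 : 0 <= s. Proof. by case: E_svals => _ _ sE_ge0 _; apply: nth_ge0. Qed.

Lemma gain_ge0 : 0 <= gain. Proof. by rewrite mulr_ge0 ?sqrtr_ge0 ?s_ge0. Qed.

Lemma Z1_scalar : Z1 C E P pi = x ^+ 2 - y ^+ 2 + 2 * cross.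
Proof. by rewrite /Z1 cross_split hs2_diff !sqr_sqrtr ?hs2_ge0. Qed.

Lemma x_le_y : x <= y.
Proof. by rewrite ler_sqrt ?hs2_ge0 ?hs2_X1_le_X2. Qed.

Lemma cross_le : cross <= gain * (x + y).
Proof.
have gain_sqr t : 0 <= t -> (gain * Num.sqrt t) ^+ 2 = rM * s ^+ 2 * t.
  by move=> t_ge0; rewrite /gain !exprMn !sqr_sqrtr ?rM_ge0.
have gain_sqrt_ge0 t : 0 <= gain * Num.sqrt t by rewrite mulr_ge0 ?gain_ge0 ?sqrtr_ge0.
have t1_le : \tr (E^T *m X1) <= gain * x.
  apply: le_of_sqr_le; first exact: gain_sqrt_ge0.
  by rewrite gain_sqr ?hs2_ge0 ?cross_X1_le.
have t2_le : - \tr (E^T *m X2) <= gain * y.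
  apply: le_of_sqr_le; first exact: gain_sqrt_ge0.
  by rewrite sqrrN gain_sqr ?hs2_ge0 ?cross_X2_le.
by rewrite /cross mulrDr; lra.
Qed.

Lemma top_sqr : (lam`_0 * d) ^+ 2 = a 0 * defect.
Proof. by rewrite exprMn sqr_sqrtr ?defect_ge0. Qed.

Lemma x_le_top : x <= lam`_0 * d.
Proof.
apply: le_of_sqr_le; first by rewrite mulr_ge0 ?sqrtr_ge0 ?nth_ge0.
by rewrite top_sqr sqr_sqrtr ?hs2_ge0 ?hs2_X1_le.
Qed.

Lemma y_le_top : y <= lam`_0 * d.
Proof.
apply: le_of_sqr_le; first by rewrite mulr_ge0 ?sqrtr_ge0 ?nth_ge0.
by rewrite top_sqr sqr_sqrtr ?hs2_ge0 ?hs2_X2_le.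
Qed.

Lemma d_le : d <= Num.sqrt rM.
Proof. by rewrite ler_sqrt ?rM_ge0 ?defect_le_rM. Qed.

Lemma x_le_Delta : x <= Num.sqrt (Delta lam r).
Proof.
by rewrite ler_sqrt ?Delta_shift ?hs2_X1_le_Delta // sumr_ge0 // => i _; rewrite sqr_ge0.
Qed.

(* The three estimates of the proposition, with lambda_k = lam`_(k-1). *)
Lemma Z1_bound_I : Z1 C E P pi <= 4 * rM * lam`_0 * s.
Proof.
have := scalar_bound_I (sqrtr_ge0 _) (sqrtr_ge0 _) gain_ge0 (nth_ge0 lam_ge0 0)
  (sqrtr_ge0 _) d_le x_le_top y_le_top x_le_y cross_le.
rewrite -Z1_scalar /gain; set sr := Num.sqrt rM.
by rewrite -[rM](sqr_sqrtr rM_ge0) -/sr; congr (_ <= _); ring.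
Qed.

Lemma Z1_bound_II : lam`_r < lam`_r.-1 ->
  Z1 C E P pi <= 4 * rM * (lam`_0 ^+ 2 / (lam`_r.-1 ^+ 2 - lam`_r ^+ 2)) * s ^+ 2.
Proof.
move=> lam_gap; have gap : a r < c.
  by rewrite /c /a ltr_pXn2r // nnegrE nth_ge0.
have x_gap : x ^+ 2 <= a r * d ^+ 2.
  by rewrite !sqr_sqrtr ?hs2_ge0 ?defect_ge0 ?gap_X1.
have y_gap : c * d ^+ 2 <= y ^+ 2.
  by rewrite !sqr_sqrtr ?hs2_ge0 ?defect_ge0 ?gap_X2.
have := scalar_bound_II (sqrtr_ge0 _) (sqrtr_ge0 _) gain_ge0 (nth_ge0 lam_ge0 0)
  (sqrtr_ge0 _) gap x_le_top y_le_top x_gap y_gap cross_le.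
rewrite -Z1_scalar /gain exprMn sqr_sqrtr ?rM_ge0 // => /le_trans; apply.
by rewrite le_eqVlt; apply/orP; left; apply/eqP; rewrite /c /a; ring.
Qed.

Lemma Z1_bound_III : 0 < lam`_r.-1 ->
  Z1 C E P pi <= Num.max (4 * Num.sqrt (rM * Delta lam r) * (lam`_0 / lam`_r.-1) * s)
                         (8 * rM * (lam`_0 ^+ 2 / lam`_r.-1 ^+ 2) * s ^+ 2).
Proof.
move=> lr_gt0.
have ratio_ge1 : 1 <= lam`_0 / lam`_r.-1.
  by rewrite ler_pdivlMr // mul1r nth_noninc.
have ratio2_ge1 : 1 <= lam`_0 ^+ 2 / lam`_r.-1 ^+ 2.
  by rewrite -expr_div_n exprn_ege1.
rewrite Z1_scalar; apply: le_trans (scalar_bound_III (sqrtr_ge0 _) (sqrtr_ge0 _)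
  gain_ge0 (sqrtr_ge0 _) x_le_y x_le_Delta cross_le) _.
apply: le_max2.
  set k := 4 * (Num.sqrt rM * Num.sqrt (Delta lam r)) * s.
  have k_ge0 : 0 <= k by rewrite !mulr_ge0 ?sqrtr_ge0 ?s_ge0.
  rewrite /gain sqrtrM ?rM_ge0 //.
  have -> : 4 * (Num.sqrt rM * s) * Num.sqrt (Delta lam r) = k by rewrite /k; ring.
  have -> : 4 * (Num.sqrt rM * Num.sqrt (Delta lam r)) * (lam`_0 / lam`_r.-1) * s
      = k * (lam`_0 / lam`_r.-1) by rewrite /k; ring.
  exact: ler_peMr.
set k := 4 * (rM * s ^+ 2).
have k_ge0 : 0 <= k by apply: mulr_ge0 => //; rewrite mulr_ge0 ?rM_ge0 ?sqr_ge0.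
rewrite /gain exprMn sqr_sqrtr ?rM_ge0 // -/k.
have -> : 8 * rM * (lam`_0 ^+ 2 / lam`_r.-1 ^+ 2) * s ^+ 2
    = (2 * k) * (lam`_0 ^+ 2 / lam`_r.-1 ^+ 2) by rewrite /k; ring.
apply: le_trans (ler_peMr _ ratio2_ge1); lra.
Qed.

End Proposition.

Theorem proposition1 (R : rcfType) (M r : nat) (C E pi : 'M[R]_M)
  (lam sE : seq R) :
  (1 <= r <= M)%N ->
  is_svals C lam ->
  is_svals E sE ->
  is_orth_proj r pi ->
  (forall P : 'M[R]_M, is_orth_proj r P -> hs2 (P *m C) <= hs2 (pi *m C)) ->
  let rM : R := (minn r (M - r))%:R in
  let l1 := lam_ lam 1 in
  let lr := lam_ lam r in
  let lr1 := lam_ lam r.+1 in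
  let s1 := lam_ sE 1 in
  forall P : 'M[R]_M, is_orth_proj r P ->
    [/\ Z1 C E P pi <= 4 * rM * l1 * s1,
        lr1 < lr ->
          Z1 C E P pi <= 4 * rM * (l1 ^+ 2 / (lr ^+ 2 - lr1 ^+ 2)) * s1 ^+ 2
      & 0 < lr ->
          Z1 C E P pi <= Num.max (4 * Num.sqrt (rM * Delta lam r) * (l1 / lr) * s1)
                                 (8 * rM * (l1 ^+ 2 / lr ^+ 2) * s1 ^+ 2)].
Proof.
move=> /andP[_ r_le_M] [lam_size lam_sorted lam_ge0 [U [V [oU oV C_svd]]]] E_svals
  pi_rank pi_max rM l1 lr lr1 s1 P P_rank.
split.
- exact: (Z1_bound_I r_le_M lam_sorted lam_ge0 oU oV C_svd E_svals pi_rank pi_max P_rank).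
- exact: (Z1_bound_II r_le_M lam_sorted lam_ge0 oU oV C_svd E_svals pi_rank pi_max P_rank).
- exact: (Z1_bound_III r_le_M lam_size lam_sorted lam_ge0 oU oV C_svd E_svals pi_rank
    pi_max P_rank).
Qed.
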